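(* For every integer $n\ge1$, with $$S_{n,n}=(-1)^n\sum_{i=0}^n\sum_{p=0}^i(-1)^p\binom{n+1}{i-p}p^n,\qquad C_{n,n}=\sum_{k=1}^n\frac{2^n-2^{n-k}}{k+1}\sum_{t=0}^{k+1}(-1)^t\binom{k+1}{t}t^{n+1},$$ one has $S_{n,n}=C_{n,n}$.
   Context: Convention $0^0=1$. *)

(* all quantities computed in rat (C_{n,n} involves division by k+1).
   Powers use ^+ with 0 ^+ 0 = 1, matching the convention 0^0 = 1. *)
From HB Require Import structures.
From mathcomp Require Import all_boot all_order all_algebra.
Set Implicit Arguments. Unset Strict Implicit. Unset Printing Implicit Defensive.
Import Order.TTheory GRing.Theory Num.Theory.
Local Open Scope ring_scope.

Definition S_nn (n : nat) : rat :=
  (-1) ^+ n * \sum_(0 <= i < n.+1) \sum_(0 <= p < i.+1)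
      (-1) ^+ p * ('C(n.+1, i - p))%:R * (p%:R) ^+ n.

Definition C_nn (n : nat) : rat :=
  \sum_(1 <= k < n.+1)
    ((2 ^+ n - 2 ^+ (n - k)) / (k.+1)%:R) *
    \sum_(0 <= t < k.+2) (-1) ^+ t * ('C(k.+1, t))%:R * (t%:R) ^+ n.+1.

From HB Require Import structures.
From mathcomp Require Import all_boot all_order all_algebra.
Set Implicit Arguments. Unset Strict Implicit. Unset Printing Implicit Defensive.
Import Order.TTheory GRing.Theory Num.Theory.
Local Open Scope ring_scope.

Lemma signr_sq (R : pzRingType) (s : nat) : (-1) ^+ s * (-1) ^+ s = 1 :> R.
Proof. by have := signrMK s (1 : R); rewrite mulr1. Qed.

Lemma signr_subn (R : pzRingType) (m s : nat) :
  (s <= m)%N -> (-1) ^+ (m - s) = (-1) ^+ m * (-1) ^+ s :> R.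
Proof. by move=> le_sm; rewrite -{2}(subnK le_sm) exprD -mulrA signr_sq mulr1. Qed.

Lemma binS_absorb (R : pzSemiRingType) (m i : nat) :
  'C(m.+1, i.+1)%:R * i.+1%:R = m.+1%:R * 'C(m, i)%:R :> R.
Proof. by rewrite -!natrM mulnC -mul_bin_diag. Qed.

Lemma triangle_convolution (R : pzSemiRingType) (u v : nat -> R) (M : nat) :
  \sum_(0 <= i < M.+1) \sum_(0 <= p < i.+1) u (i - p)%N * v p
  = \sum_(0 <= j < M.+1) u j * \sum_(0 <= q < (M - j).+1) v q.
Proof.
elim: M => [|M IH]; first by rewrite !big_nat1.
rewrite big_nat_recr //= IH [in RHS]big_nat_recr //= subnn big_nat1.
have -> : \sum_(0 <= j < M.+1) u j * \sum_(0 <= q < (M.+1 - j).+1) v q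
   = \sum_(0 <= j < M.+1) (u j * \sum_(0 <= q < (M - j).+1) v q
                           + u j * v (M.+1 - j)%N).
  by apply: eq_big_nat => j /andP[_ hj]; rewrite subSn // big_nat_recr //= mulrDr.
rewrite big_split /= -addrA; congr (_ + _).
rewrite -[u M.+1 * v 0%N](congr1 (fun k => u M.+1 * v k) (subnn M.+1)).
rewrite -(big_nat_recr _ _ (fun j => u j * v (M.+1 - j)%N)) //.
rewrite big_nat_rev /=; apply: eq_big_nat => p /andP[_ hp].
by rewrite add0n subSS subKn // mulrC.
Qed.

Section AlternatingDifference.
Variable R : comNzRingType.
Implicit Types (g : R -> R) (a c x : R).

(* altdiff m g x = ((1 - shift)^m g)(x), where shift g = g (_ + 1). *)
Definition altdiff (m : nat) g x : R :=
  \sum_(s < m.+1) (-1) ^+ s * 'C(m, s)%:R * g (x + s%:R).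

Lemma altdiff0 g x : altdiff 0 g x = g x.
Proof. by rewrite /altdiff big_ord1 expr0 mul1r bin0 mul1r addr0. Qed.

Lemma altdiffS m g x : altdiff m.+1 g x = altdiff m g x - altdiff m g (x + 1).
Proof.
rewrite /altdiff big_ord_recl [X in _ = X - _]big_ord_recl /=.
under eq_bigr => i _ do rewrite binS natrD mulrDr mulrDl.
rewrite big_split /= big_ord_recr /= (bin_small (ltnSn m)) mulr0 mul0r addr0.
rewrite !bin0 addrA addr0; congr (_ + _ + _); rewrite -sumrN; apply: eq_bigr => i _.
by rewrite exprS mulN1r !mulNr /bump /= add1n -nat1r addrA.
Qed.

Lemma altdiff_comp m k g x : altdiff m (altdiff k g) x = altdiff (m + k) g x.
Proof.
elim: m x => [|m IH] x; first by rewrite altdiff0.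
by rewrite altdiffS !IH addSn altdiffS.
Qed.

Lemma altdiffB m g1 g2 x :
  altdiff m (fun y => g1 y - g2 y) x = altdiff m g1 x - altdiff m g2 x.
Proof. by rewrite /altdiff -sumrB; apply: eq_bigr => i _; rewrite mulrBr. Qed.

Lemma altdiffZ m c g x : altdiff m (fun y => c * g y) x = c * altdiff m g x.
Proof. by rewrite /altdiff mulr_sumr; apply: eq_bigr => i _; rewrite mulrCA. Qed.

Lemma altdiff_reflect m g a x :
  altdiff m (fun y => g (a - y)) x = (-1) ^+ m * altdiff m g (a - x - m%:R).
Proof.
rewrite /altdiff (reindex_inj rev_ord_inj) /= mulr_sumr; apply: eq_bigr => i _.
have le_im : (i <= m)%N by rewrite -ltnS.
rewrite subSS signr_subn // bin_sub // natrB //.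
rewrite -!mulrA; congr (_ * (_ * (_ * g _))).
by rewrite opprD opprB !addrA addrAC.
Qed.

Lemma altdiff_powS m d a :
  altdiff m.+1 (fun y => y ^+ d.+1) a
  = altdiff m.+1 (fun y => y ^+ d) a * a
    - m.+1%:R * altdiff m (fun y => y ^+ d) (a + 1).
Proof.
rewrite /altdiff; under eq_bigr => i _ do rewrite exprSr mulrDr mulrDr.
rewrite big_split /= mulr_suml.
congr (_ + _); first by apply: eq_bigr => i _; rewrite mulrA.
rewrite big_ord_recl /= !mulr0 add0r mulr_sumr -sumrN; apply: eq_bigr => i _.
have -> : a + i.+1%:R = a + 1 + i%:R by rewrite -nat1r addrA.
rewrite /bump /= add1n exprS mulN1r.
rewrite !mulNr; congr (- _).
by rewrite [_ ^+ d * _]mulrC mulrA -[_ * 'C(m.+1, i.+1)%:R * _]mulrA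
  binS_absorb mulrCA -!mulrA.
Qed.

Lemma altdiff_pow d m a : (d < m)%N -> altdiff m (fun y => y ^+ d) a = 0.
Proof.
elim: d m a => [|d IH] m a lt_dm.
  transitivity ((1 + (-1 : R)) ^+ m); last by rewrite subrr expr0n; case: m lt_dm.
  rewrite exprDn; apply: eq_bigr => i _.
  by rewrite expr1n mul1r mulr_natr expr0 mulr1.
case: m lt_dm => [//|m] lt_dm.
by rewrite altdiff_powS !IH ?mul0r ?mulr0 ?subrr // ltnW.
Qed.

Lemma altdiff_pow_at0 n k :
  \sum_(0 <= t < k.+2) (-1) ^+ t * 'C(k.+1, t)%:R * t%:R ^+ n.+1
  = - (k.+1%:R * altdiff k (fun y => y ^+ n) 1).
Proof.
transitivity (altdiff k.+1 (fun y => y ^+ n.+1) 0).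
  by rewrite big_mkord; apply: eq_bigr => t _; rewrite add0r.
by rewrite altdiff_powS mulr0 add0r add0r.
Qed.

Definition diffsum (n : nat) c x : R :=
  \sum_(k < n.+1) c ^+ k * altdiff k (fun y => y ^+ n) x.

Lemma altdiff_diffsum m n c x :
  altdiff m (diffsum n c) x
  = \sum_(k < n.+1) c ^+ k * altdiff (m + k) (fun y => y ^+ n) x.
Proof.
under [RHS]eq_bigr => k _ do rewrite -altdiff_comp.
rewrite /altdiff /diffsum; under eq_bigr => s _ do rewrite mulr_sumr.
rewrite exchange_big; apply: eq_bigr => k _.
by rewrite mulr_sumr; apply: eq_bigr => s _; rewrite mulrCA.
Qed.

Lemma altdiff_diffsum_eq0 m n c x : (n < m)%N -> altdiff m (diffsum n c) x = 0.
Proof.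
move=> lt_nm; rewrite altdiff_diffsum big1 // => k _.
by rewrite altdiff_pow ?mulr0 // (leq_trans lt_nm) // leq_addr.
Qed.

Lemma diffsum_shift n c x :
  c * diffsum n c (x + 1) = c * diffsum n c x - diffsum n c x + x ^+ n.
Proof.
have shifted : diffsum n c (x + 1)
    = diffsum n c x - \sum_(k < n.+1) c ^+ k * altdiff k.+1 (fun y => y ^+ n) x.
  rewrite /diffsum -sumrB; apply: eq_bigr => k _.
  by rewrite altdiffS mulrBr opprB addrCA subrr addr0.
have raised : c * \sum_(k < n.+1) c ^+ k * altdiff k.+1 (fun y => y ^+ n) x
    = diffsum n c x - x ^+ n.
  have top : \sum_(k < n.+2) c ^+ k * altdiff k (fun y => y ^+ n) x = diffsum n c x.
    by rewrite big_ord_recr /= altdiff_pow // mulr0 addr0.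
  rewrite -top [X in _ = X - _]big_ord_recl /= expr0 mul1r altdiff0.
  rewrite (addrC (x ^+ n)) addrK mulr_sumr; apply: eq_bigr => k _.
  by rewrite /bump /= exprS mulrA.
by rewrite shifted mulrBr raised opprB addrA addrAC.
Qed.

(* For c = 1 the telescoping law reads  D(x + 1) = x^n. *)
Lemma diffsum1_at1 n : (0 < n)%N -> diffsum n 1 1 = 0.
Proof.
move=> n_gt0; have := diffsum_shift n 1 0.
by rewrite !mul1r add0r subrr add0r expr0n eqn0Ngt n_gt0.
Qed.

End AlternatingDifference.

Section EulerPolynomial.
Variable F : fieldType.
Hypothesis two_neq0 : 2%:R != 0 :> F.

(* The Euler polynomial E_n(x). *)
Definition euler (n : nat) (x : F) : F := diffsum n 2^-1 x.

Lemma half_add_half : 2^-1 + 2^-1 = 1 :> F.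
Proof. by rewrite -mulr2n -[LHS]mulr_natr mulVf. Qed.

Lemma euler_mean n x : 2^-1 * (euler n x + euler n (x + 1)) = x ^+ n.
Proof.
rewrite mulrDr /euler diffsum_shift !addrA -mulrDl half_add_half.
by rewrite mul1r subrr add0r.
Qed.

(* Reflection symmetry  E_n(x) = (-1)^n E_n(1 - x):  the defect D satisfies
   D(x + 1) = - D(x), so altdiff n.+1 D x = 2^(n+1) D(x), while altdiff n.+1
   kills D since E_n is a combination of polynomials of degree <= n. *)
Lemma euler_reflect n x : euler n x = (-1) ^+ n * euler n (1 - x).
Proof.
pose D z := euler n z - (-1) ^+ n * euler n (1 - z).
have D_shift z : D (z + 1) = - D z.
  apply: (@mulfI _ 2^-1); first by rewrite invr_eq0.
  apply/eqP; rewrite -subr_eq0 mulrN opprK -mulrDr /D.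
  have -> : 1 - (z + 1) = - z by rewrite opprD addrCA subrr addr0.
  rewrite (addrC 1) addrACA (addrC (euler n (z + 1))) -opprD -mulrDr.
  by rewrite mulrBr mulrCA !euler_mean (exprNn z) mulrA signr_sq mul1r subrr.
have D_shiftn z (s : nat) : D (z + s%:R) = (-1) ^+ s * D z.
  elim: s => [|s IH]; first by rewrite addr0 expr0 mul1r.
  by rewrite -natr1 addrA D_shift IH exprS mulN1r mulNr.
have altdiffD : altdiff n.+1 D x = 2%:R ^+ n.+1 * D x.
  rewrite -[2%:R]/(1 + 1 : F) exprDn mulr_suml; apply: eq_bigr => s _.
  by rewrite D_shiftn !expr1n mul1r mulrCA !mulrA signr_sq mul1r.
have altdiffD0 : altdiff n.+1 D x = 0.
  rewrite /D altdiffB altdiffZ (altdiff_reflect _ (euler n) 1).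
  by rewrite !altdiff_diffsum_eq0 // !mulr0 subrr.
move: altdiffD0; rewrite altdiffD => /eqP; rewrite mulf_eq0 expf_eq0 (negPf two_neq0).
by rewrite andbF /= /D subr_eq0 => /eqP.
Qed.

Lemma alt_power_sum n m :
  \sum_(0 <= q < m.+1) (-1) ^+ q * q%:R ^+ n
  = 2^-1 * (euler n 0 + (-1) ^+ m * euler n m.+1%:R).
Proof.
elim: m => [|m IH]; first by rewrite big_nat1 expr0 !mul1r -(euler_mean n 0) add0r.
rewrite big_nat_recr //= IH -(euler_mean n m.+1%:R) natr1 exprS mulN1r.
rewrite (mulrCA (- _)) -mulrDr; congr (_ * _).
by rewrite mulrDr !mulNr addrA addrK.
Qed.

(* Splitting each
   inner sum by alt_power_sum, the E_n(0) parts add up to 2^(n+1) E_n(0) / 2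
   and the remaining parts form an (n+1)-st difference of a reflected E_n. *)
Lemma binomial_alt_power_sum n :
  \sum_(0 <= j < n.+2) 'C(n.+1, j)%:R *
      \sum_(0 <= q < (n.+1 - j).+1) (-1) ^+ q * q%:R ^+ n
  = 2%:R ^+ n * euler n 0.
Proof.
pose X j := (-1) ^+ (n.+1 - j) * euler n (n.+1 - j).+1%:R.
have split_sum : forall j, 'C(n.+1, j)%:R *
      \sum_(0 <= q < (n.+1 - j).+1) (-1) ^+ q * q%:R ^+ n
    = 2^-1 * (euler n 0 * 'C(n.+1, j)%:R) + 2^-1 * ('C(n.+1, j)%:R * X j).
  by move=> j; rewrite alt_power_sum -mulrDr mulrCA (mulrC (euler n 0)) -mulrDr.
have reflected : \sum_(0 <= j < n.+2) 'C(n.+1, j)%:R * X j = 0.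
  transitivity ((-1) ^+ n.+1 * altdiff n.+1 (fun y => euler n (n.+2%:R - y)) 0).
    rewrite /altdiff big_mkord mulr_sumr; apply: eq_bigr => j _.
    have le_jn : (j <= n.+1)%N by rewrite -ltnS ltn_ord.
    rewrite /X signr_subn // -!mulrA mulrCA; congr (_ * _).
    rewrite mulrCA; congr (_ * (_ * euler n _)).
    by rewrite -subSn // natrB ?add0r // (leq_trans le_jn).
  by rewrite altdiff_reflect altdiff_diffsum_eq0 // !mulr0.
rewrite (eq_bigr _ (fun j _ => split_sum j)) big_split /= -!mulr_sumr reflected.
rewrite mulr0 addr0 big_mkord.
have -> : \sum_(j < n.+2) 'C(n.+1, j)%:R = 2%:R ^+ n.+1 :> F.
  by rewrite -[2%:R]/(1 + 1 : F) exprDn; apply: eq_bigr => j _; rewrite !expr1n mul1r.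
by rewrite exprS mulrCA [2^-1 * _]mulrA mulVf // mul1r mulrC.
Qed.

(* Expansion of E_n(1) used for C_{n,n}: the unweighted sum (c = 1) vanishes
   at 1, so only the 2^(n-k) weights survive. *)
Lemma euler1_expansion n : (0 < n)%N ->
  \sum_(0 <= k < n.+1) (2%:R ^+ (n - k) - 2%:R ^+ n) * altdiff k (fun y => y ^+ n) 1
  = 2%:R ^+ n * euler n 1.
Proof.
move=> n_gt0.
have weight k : (k <= n)%N -> 2%:R ^+ (n - k) = 2%:R ^+ n * 2^-1 ^+ k :> F.
  by move=> le_kn; rewrite -(subnK le_kn) addnK exprD exprVn mulfK // expf_neq0.
rewrite (eq_big_nat _ _ (F2 := fun k => 2%:R ^+ n * (2^-1 ^+ k *
    altdiff k (fun y => y ^+ n) 1) - 2%:R ^+ n * (1 ^+ k *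
    altdiff k (fun y => y ^+ n) 1))); last first.
  by move=> k /andP[_ lt_kn]; rewrite weight // expr1n mul1r mulrA mulrBl.
rewrite sumrB -!mulr_sumr !big_mkord -[\sum_(k < n.+1) 1 ^+ k * _]/(diffsum n 1 1).
by rewrite diffsum1_at1 // mulr0 subr0.
Qed.

End EulerPolynomial.

Lemma rat_two_neq0 : 2%:R != 0 :> rat.
Proof. by []. Qed.

(* S_{n,n} = (-1)^n 2^n E_n(0):  the double sum is a triangular convolution of
   binomial coefficients with alternating powers; its missing last row
   i = n + 1 is an (n+1)-st difference of y^n, hence zero. *)
Lemma S_nn_euler n : S_nn n = (-1) ^+ n * (2%:R ^+ n * euler n 0).
Proof.
rewrite /S_nn -binomial_alt_power_sum; last exact: rat_two_neq0.
congr (_ * _).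
rewrite -(triangle_convolution (fun j => 'C(n.+1, j)%:R)
                               (fun q => (-1) ^+ q * q%:R ^+ n)) /=.
rewrite [RHS]big_nat_recr //=.
have -> : \sum_(0 <= p < n.+2) 'C(n.+1, n.+1 - p)%:R * ((-1) ^+ p * p%:R ^+ n) = 0 :> rat.
  transitivity (altdiff n.+1 (fun y : rat => y ^+ n) 0); last exact: altdiff_pow.
  rewrite /altdiff big_mkord; apply: eq_bigr => p _.
  have le_pn : (p <= n.+1)%N by rewrite -ltnS.
  by rewrite bin_sub // add0r mulrCA mulrA.
by rewrite addr0; apply: eq_bigr => i _; apply: eq_bigr => p _; rewrite mulrCA mulrA.
Qed.

(* C_{n,n} = 2^n E_n(1):  by altdiff_pow_at0 each inner sum is
   -(k+1) altdiff k (y^n) 1, which cancels the denominator k + 1; the added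
   k = 0 term of euler1_expansion vanishes. *)
Lemma C_nn_euler n : (0 < n)%N -> C_nn n = 2%:R ^+ n * euler n 1.
Proof.
move=> n_gt0; rewrite /C_nn -(euler1_expansion rat_two_neq0 n_gt0).
rewrite [RHS]big_ltn // subn0 subrr mul0r add0r.
apply: eq_big_nat => k _.
by rewrite altdiff_pow_at0 mulrN mulrA divfK ?pnatr_eq0 // -mulNr opprB.
Qed.

(* S_{n,n} = (-1)^n 2^n E_n(0) = 2^n E_n(1) = C_{n,n} by reflection symmetry. *)
Theorem mainTheorem14 (n : nat) : (1 <= n)%N -> S_nn n = C_nn n.
Proof.
move=> n_gt0; rewrite S_nn_euler C_nn_euler // (euler_reflect rat_two_neq0 n 0).
by rewrite subr0 mulrCA signrMK.
Qed.
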